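(* Let $G=(V,E,\{c_e\}_{e\in E})$ be a finite undirected graph with positive conductances and arbitrarily oriented edges. Let $h\in\mathbb{R}^V_{>0}$ and $w\in\mathbb{R}^E_{\ge0}$. Then $$\left(w^\top C^{1/2}|Bh|\right)^2\le\frac{\mathcal{I}(h)}{2}\sum_{x\in V}h(x)\sum_{e:\,x\in e}w_e^2,$$ where $|Bh|$ denotes the coordinatewise absolute value of $Bh$ and $$\mathcal{I}(h):=h^\top L\log h=\sum_{xy\in E}c_{xy}\big(h(x)-h(y)\big)\big(\log h(x)-\log h(y)\big),$$ with $\log h$ taken coordinatewise.
   Context: For a vertex $v$, $\mathbbm{1}_v\in\mathbb{R}^V$ is the standard basis vector. For an edge $e$ oriented from $e^-$ to $e^+$, $b_e:=\mathbbm{1}_{e^+}-\mathbbm{1}_{e^-}$; $B\in\mathbb{R}^{E\times V}$ is the matrix with row $b_e^\top$ for each $e$. $C=\operatorname{diag}(c_e)$, $L:=B^\top CB$. Graphs have no self-loops. *)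

From HB Require Import structures.
From mathcomp Require Import all_boot all_order all_algebra.
From mathcomp Require Import all_classical all_reals all_analysis.
Set Implicit Arguments. Unset Strict Implicit. Unset Printing Implicit Defensive.
Import Order.TTheory GRing.Theory Num.Theory.
Local Open Scope ring_scope.

(* Graph: vertices 'I_n, edges 'I_m; edge e oriented from tl e to hd e. *)

Definition incidence (R : realType) (n m : nat) (tl hd : 'I_m -> 'I_n)
  : 'M[R]_(m, n) :=
  \matrix_(e < m, v < n) ((v == hd e)%:R - (v == tl e)%:R).

Definition condmx (R : realType) (m : nat) (c : 'I_m -> R) : 'M[R]_m :=
  diag_mx (\row_e c e).

Definition condmx_sqrt (R : realType) (m : nat) (c : 'I_m -> R) : 'M[R]_m :=
  diag_mx (\row_e Num.sqrt (c e)).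

Definition laplacian (R : realType) (n m : nat) (tl hd : 'I_m -> 'I_n)
  (c : 'I_m -> R) : 'M[R]_n :=
  (incidence R tl hd)^T *m condmx c *m incidence R tl hd.

Definition entropy_I (R : realType) (n m : nat) (tl hd : 'I_m -> 'I_n)
  (c : 'I_m -> R) (h : 'cV[R]_n) : R :=
  (h^T *m laplacian tl hd c *m map_mx (@ln R) h) ord0 ord0.

From HB Require Import structures.
From mathcomp Require Import all_boot all_order all_algebra.
From mathcomp Require Import all_classical all_reals all_analysis.
From mathcomp Require Import ring lra.
Import Order.TTheory GRing.Theory Num.Theory.
Local Open Scope ring_scope.

(* Edgewise, the logarithmic mean (a - b) / (ln a - ln b) is at most the
   arithmetic mean (a + b) / 2, so
   c (a - b)^2 <= c (a - b)(ln a - ln b) (a + b) / 2.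
   Summing over the edges with weights w_e and applying Cauchy-Schwarz bounds
   (sum_e w_e sqrt(c_e) |a_e - b_e|)^2 by I(h)/2 times
   sum_e w_e^2 (h(e^-) + h(e^+)), and the last sum is the vertex sum of the
   statement read edge by edge. *)

Section LogarithmicMean.
Context {R : realType}.

Lemma logmean_le_arithmean (a b : R) : 0 < b -> b <= a ->
  2 * (a - b) <= (ln a - ln b) * (a + b).
Proof.
move=> b_gt0 ba.
pose g x := (ln x - ln b) * (x + b) - 2 * (x - b).
pose dg x := (ln x - ln b) + (x + b) / x - 2.
have g_derive (x : R) : 0 < x -> is_derive x 1 g (dg x).
  move=> x_gt0.
  have dlnB := is_deriveB (is_derive1_ln x_gt0) (is_derive_cst (ln b) x 1).
  have dD := is_deriveD (is_derive_id x 1) (is_derive_cst b x 1).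
  have dB := is_deriveB (is_derive_id x 1) (is_derive_cst b x 1).
  have := is_deriveB (is_deriveM dlnB dD) (is_deriveZ 2 dB).
  by rewrite /GRing.scale /= !subr0 !addr0 !mulr1.
have [c] : exists2 c, c \in `[b, a]%R & g a - g b = dg c * (a - b).
  apply: MVT_segment => // [x|].
    by rewrite in_itv /= => /andP[bx _]; exact: g_derive (lt_trans b_gt0 bx).
  apply: derivable_within_continuous => x; rewrite in_itv /= => /andP[bx _].
  by case: (g_derive x (lt_le_trans b_gt0 bx)).
rewrite in_itv /= => /andP[bc _] g_MVT.
have c_gt0 : 0 < c := lt_le_trans b_gt0 bc.
(* [dg c >= 0] is [ln (b / c) <= b / c - 1]. *)
have dg_ge0 : 0 <= dg c.
  have : -1 < b / c - 1 by rewrite ltrBrDl subrr divr_gt0.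
  move/le_ln1Dx; rewrite addrC subrK ln_div ?posrE // => ln_le.
  by rewrite /dg mulrDl divff ?gt_eqF //; lra.
have : 0 <= g a - g b by rewrite g_MVT mulr_ge0 // subr_ge0.
by rewrite /g !subrr mul0r mulr0 subr0; lra.
Qed.

Lemma subr_mul_lnB_ge0 (a b : R) : 0 < a -> 0 < b ->
  0 <= (a - b) * (ln a - ln b).
Proof.
move=> a_gt0 b_gt0; have [ab|ba] := leP a b.
  by rewrite -mulrNN !opprB mulr_ge0 // subr_ge0 // ler_ln ?posrE.
by rewrite mulr_ge0 // subr_ge0 // ?ler_ln ?posrE // ltW.
Qed.

Lemma sqr_sub_le_logmean (a b : R) : 0 < a -> 0 < b ->
  2 * (a - b) ^+ 2 <= (a - b) * (ln a - ln b) * (a + b).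
Proof.
move=> a_gt0 b_gt0; have [ba|ab] := leP b a.
  have := logmean_le_arithmean _ _ b_gt0 ba.
  have : 0 <= a - b by rewrite subr_ge0.
  nra.
have := logmean_le_arithmean _ _ a_gt0 (ltW ab).
have : 0 <= b - a by rewrite subr_ge0 ltW.
nra.
Qed.

Lemma edge_term_le (a b c w : R) : 0 < a -> 0 < b -> 0 <= c ->
  (w * Num.sqrt c * `|a - b|) ^+ 2
  <= c * (a - b) * (ln a - ln b) * (w ^+ 2 * (b + a) / 2).
Proof.
move=> a_gt0 b_gt0 c_ge0.
rewrite !exprMn sqr_sqrtr // real_normK ?num_real //.
have -> : w ^+ 2 * c * (a - b) ^+ 2 = w ^+ 2 * c / 2 * (2 * (a - b) ^+ 2).
  by field.
have -> : c * (a - b) * (ln a - ln b) * (w ^+ 2 * (b + a) / 2)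
  = w ^+ 2 * c / 2 * ((a - b) * (ln a - ln b) * (a + b)) by field.
apply: ler_wpM2l; last exact: sqr_sub_le_logmean.
by rewrite divr_ge0 ?ler0n // mulr_ge0 ?sqr_ge0.
Qed.

End LogarithmicMean.

Lemma cauchy_schwarz_sum (R : realFieldType) (I : finType) (x p q : I -> R) :
  (forall i, 0 <= p i) -> (forall i, 0 <= q i) ->
  (forall i, x i ^+ 2 <= p i * q i) ->
  (\sum_i x i) ^+ 2 <= (\sum_i p i) * (\sum_i q i).
Proof.
move=> p_ge0 q_ge0 xpq.
have pqE : (\sum_i p i) * (\sum_i q i) = \sum_i \sum_j p i * q j.
  by rewrite mulr_suml; apply: eq_bigr => i _; rewrite mulr_sumr.
have symE : \sum_i \sum_j (p i * q j + p j * q i)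
    = 2 * ((\sum_i p i) * (\sum_i q i)).
  rewrite (eq_bigr _ (fun i _ => big_split _ _ _ _ _)) big_split /=.
  by rewrite [X in _ + X]exchange_big /= -pqE mulr_natl mulr2n.
rewrite -(ler_pM2l (ltr0Sn R 1)) -symE expr2 mulr_suml mulr_sumr.
apply: ler_sum => i _; rewrite mulr_sumr mulr_sumr; apply: ler_sum => j _.
(* AM-GM, using [(x_i x_j)^2 <= (p_i q_j) (p_j q_i)]. *)
have xij : (x i * x j) ^+ 2 <= p i * q j * (p j * q i).
  have -> : p i * q j * (p j * q i) = p i * q i * (p j * q j) by ring.
  rewrite exprMn.
  by apply: ler_pM; rewrite ?sqr_ge0 ?xpq.
have := mulr_ge0 (p_ge0 i) (q_ge0 j); have := mulr_ge0 (p_ge0 j) (q_ge0 i).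
have := sqr_ge0 (p i * q j - p j * q i); nra.
Qed.

Section IncidenceSums.
Context {R : realType} {n m : nat} (tl hd : 'I_m -> 'I_n).

Lemma sum_delta (f : 'I_n -> R) (a : 'I_n) :
  \sum_v (v == a)%:R * f v = f a.
Proof.
rewrite (bigD1 a) //= eqxx mul1r big1 ?addr0 // => v /negbTE ->.
by rewrite mul0r.
Qed.

Lemma incidence_mulE (g : 'cV[R]_n) e :
  \sum_v incidence R tl hd e v * g v ord0 = g (hd e) ord0 - g (tl e) ord0.
Proof.
under eq_bigr do rewrite mxE mulrBl.
by rewrite sumrB !sum_delta.
Qed.

Lemma weighted_norm_incidenceE (c : 'I_m -> R) (w : 'cV[R]_m) (h : 'cV[R]_n) :
  (w^T *m condmx_sqrt c *m map_mx Num.norm (incidence R tl hd *m h)) ord0 ord0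
  = \sum_e w e ord0 * Num.sqrt (c e) * `|h (hd e) ord0 - h (tl e) ord0|.
Proof.
rewrite /condmx_sqrt mul_mx_diag mxE; apply: eq_bigr => e _.
by rewrite !mxE incidence_mulE.
Qed.

Lemma entropy_IE (c : 'I_m -> R) (h : 'cV[R]_n) :
  entropy_I tl hd c h = \sum_e c e * (h (hd e) ord0 - h (tl e) ord0) *
                         (ln (h (hd e) ord0) - ln (h (tl e) ord0)).
Proof.
rewrite /entropy_I /laplacian /condmx !mulmxA -trmx_mul -!mulmxA.
rewrite mulmxA mul_mx_diag mxE; apply: eq_bigr => e _.
by rewrite !mxE !incidence_mulE !mxE [_ * c e]mulrC.
Qed.

Lemma sum_incident_edgesE (f : 'I_m -> R) (h : 'I_n -> R) :
  (forall e, tl e != hd e) ->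
  \sum_x h x * \sum_(e | (x == tl e) || (x == hd e)) f e
  = \sum_e f e * (h (tl e) + h (hd e)).
Proof.
move=> loopless; under eq_bigr do rewrite mulr_sumr big_mkcond /=.
rewrite exchange_big /=; apply: eq_bigr => e _.
rewrite mulrDr -(sum_delta (fun x => f e * h x) (tl e))
  -(sum_delta (fun x => f e * h x) (hd e)) -big_split.
apply: eq_bigr => x _; have [->|_] := eqVneq x (tl e).
  by rewrite (negbTE (loopless e)) /= mul1r mul0r addr0 mulrC.
by case: (x == hd e); rewrite /= ?mul1r ?mul0r ?add0r // mulrC.
Qed.

End IncidenceSums.

Theorem lemma3p1 (R : realType) (n m : nat) (tl hd : 'I_m -> 'I_n)
  (c : 'I_m -> R) (h : 'cV[R]_n) (w : 'cV[R]_m)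
  (Hloop : forall e, tl e != hd e)
  (Hsimple : forall e f,
     [set tl e; hd e] = [set tl f; hd f] :> {set 'I_n} -> e = f)
  (Hc : forall e, 0 < c e)
  (Hh : forall x, 0 < h x ord0)
  (Hw : forall e, 0 <= w e ord0) :
  ((w^T *m condmx_sqrt c *m map_mx Num.norm (incidence R tl hd *m h))
      ord0 ord0) ^+ 2
  <= entropy_I tl hd c h / 2 *
     \sum_(x < n) h x ord0 *
        \sum_(e < m | (x == tl e) || (x == hd e)) w e ord0 ^+ 2.
Proof.
rewrite weighted_norm_incidenceE entropy_IE.
rewrite (sum_incident_edgesE tl hd (fun e => w e ord0 ^+ 2) (h ^~ ord0)) //.
rewrite mulrAC -mulrA [X in _ * X]mulr_suml; apply: cauchy_schwarz_sum => e.
- by rewrite -mulrA mulr_ge0 ?(ltW (Hc e)) ?subr_mul_lnB_ge0.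
- by rewrite divr_ge0 ?ler0n // mulr_ge0 ?sqr_ge0 // addr_ge0 ?(ltW (Hh _)).
- exact: edge_term_le (Hh _) (Hh _) (ltW (Hc e)).
Qed.
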